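(* Consider the ODE system $S_h'=\Lambda_h-\beta_vI_vS_h-\mu_hS_h$, $I_h'=\beta_vI_vS_h-(\mu_h+\delta+r_1)I_h$, $R_h'=r_1I_h-\mu_hR_h$, $S_v'=\Lambda_v-\beta_hS_vI_h-\mu_vS_v$, $I_v'=\beta_hS_vI_h-\mu_vI_v$, with constant parameters $\Lambda_h,\Lambda_v,\mu_h,\mu_v>0$ and $\beta_h,\beta_v,\delta,r_1\geq0$, and let $\mathcal{R}_0=\sqrt{\frac{\beta_hS_v^0}{\mu_h+\delta+r_1}\cdot\frac{\beta_vS_h^0}{\mu_v}}$ with $S_v^0=\Lambda_v/\mu_v$, $S_h^0=\Lambda_h/\mu_h$. Assume $\mathcal{R}_0>1$. Then the unique endemic equilibrium $E^*$ (the unique nonnegative equilibrium other than $(S_h^0,0,0,S_v^0,0)$) is locally asymptotically stable.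
   Context: This ODE is the age-integrated version of an age-structured malaria model in the case without loss of immunity ($r_2=0$) and with age-independent parameters. *)

From Stdlib Require Import Reals.
From Coquelicot Require Import Coquelicot.
Open Scope R_scope.

Record state := mkState { Sh : R; Ih : R; Rh : R; Sv : R; Iv : R }.

Definition malaria_field (Lh Lv muh muv bh bv delta r1 : R) (x : state) : state :=
  mkState
    (Lh - bv * Iv x * Sh x - muh * Sh x)
    (bv * Iv x * Sh x - (muh + delta + r1) * Ih x)
    (r1 * Ih x - muh * Rh x)
    (Lv - bh * Sv x * Ih x - muv * Sv x)
    (bh * Sv x * Ih x - muv * Iv x).

Definition repro_number (Lh Lv muh muv bh bv delta r1 : R) : R :=
  sqrt ((bh * (Lv / muv)) / (muh + delta + r1) * ((bv * (Lh / muh)) / muv)).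

Definition DFE (Lh Lv muh muv : R) : state :=
  mkState (Lh / muh) 0 0 (Lv / muv) 0.

Definition origin : state := mkState 0 0 0 0 0.

Definition is_equilibrium (F : state -> state) (E : state) : Prop := F E = origin.

Definition nonneg_state (x : state) : Prop :=
  0 <= Sh x /\ 0 <= Ih x /\ 0 <= Rh x /\ 0 <= Sv x /\ 0 <= Iv x.

Definition dist_state (x y : state) : R :=
  Rmax (Rabs (Sh x - Sh y))
   (Rmax (Rabs (Ih x - Ih y))
    (Rmax (Rabs (Rh x - Rh y))
     (Rmax (Rabs (Sv x - Sv y)) (Rabs (Iv x - Iv y))))).

Definition comp_solves (F : state -> state) (x : R -> state) (pi : state -> R) : Prop :=
  (forall t, 0 < t -> is_derive (fun s => pi (x s)) t (pi (F (x t)))) /\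
  filterlim (fun s => pi (x s)) (at_right 0) (locally (pi (x 0))).

Definition is_solution (F : state -> state) (x : R -> state) : Prop :=
  comp_solves F x Sh /\ comp_solves F x Ih /\ comp_solves F x Rh /\
  comp_solves F x Sv /\ comp_solves F x Iv.

Definition lyapunov_stable (F : state -> state) (E : state) : Prop :=
  forall eps, 0 < eps -> exists d, 0 < d /\
    forall x : R -> state, is_solution F x -> dist_state (x 0) E < d ->
      forall t, 0 <= t -> dist_state (x t) E < eps.

Definition locally_attractive (F : state -> state) (E : state) : Prop :=
  exists d, 0 < d /\
    forall x : R -> state, is_solution F x -> dist_state (x 0) E < d ->
      is_lim (fun t => dist_state (x t) E) p_infty 0.

Definition locally_asymptotically_stable (F : state -> state) (E : state) : Prop :=
  lyapunov_stable F E /\ locally_attractive F E.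

(* Around the endemic equilibrium E = (h, j, rho, g, k) write X = S_h/h - 1, Y = I_h/j - 1,
   Z = S_v/g - 1, W = I_v/k - 1 and p = R_h - rho.  The weighted quadratic
   h X^2 + j Y^2 + c (g Z^2 + k W^2), with c chosen so that the transmission cross terms of
   the two populations cancel, has a derivative that is only negative semidefinite; adding
   small multiples of p^2 and of the squared deviations of the total human and vector
   populations, whose dynamics are linear, makes the quadratic part of the derivative negative
   definite.  The remaining cubic terms are dominated near E, so V' <= -kappa V on a sublevel
   set {V < L}; a barrier argument keeps solutions in that set and gives
   V(x(t)) (1 + kappa t) <= V(x(0)), whence stability and attractivity.  Existence and
   uniqueness of E reduce to a linear equation for I_h, which has a positive solution when
   R_0 > 1. *)

From Stdlib Require Import Reals Lra Psatz.
From Coquelicot Require Import Coquelicot.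
Open Scope R_scope.

(** * Differential inequalities on [0, +oo) *)

Lemma locally_lt_of_continuous (f : R -> R) (t c : R) :
  continuous f t -> f t < c -> locally t (fun u => f u < c).
Proof. intros Hf Hc. exact (Hf _ (open_lt c (f t) Hc)). Qed.

Lemma first_hitting_time (f : R -> R) (a b c : R) :
  a <= b -> (forall t, a <= t <= b -> continuous f t) -> f a < c -> c <= f b ->
  exists tau, a < tau <= b /\ c <= f tau /\ forall u, a <= u < tau -> f u < c.
Proof.
  intros hab Hf Ha Hb.
  set (E := fun s => a <= s <= b /\ forall u, a <= u <= s -> f u < c).
  assert (Ea : E a) by (split; [lra | intros u hu; replace u with a by lra; exact Ha]).
  assert (Eb : bound E) by (exists b; intros s [hs _]; lra).
  destruct (completeness E Eb (ex_intro _ a Ea)) as [tau [Hub Hlub]].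
  assert (hatau : a <= tau) by exact (Hub a Ea).
  assert (htaub : tau <= b) by (apply Hlub; intros s [hs _]; lra).
  assert (Hbelow : forall u, a <= u < tau -> f u < c).
  { intros u hu. apply Rnot_le_lt. intros Hfu.
    assert (Hu : is_upper_bound E u).
    { intros s [hs Hs]. apply Rnot_lt_le. intros hus.
      apply (Rlt_not_le _ _ (Hs u ltac:(lra)) Hfu). }
    specialize (Hlub u Hu). lra. }
  assert (Htau : c <= f tau).
  { apply Rnot_lt_le. intros Hlt.
    destruct (locally_lt_of_continuous f tau c (Hf tau ltac:(lra)) Hlt) as [d Hd].
    destruct (Req_dec tau b) as [->|hne]; [lra|].
    set (s := Rmin (tau + d / 2) b).
    pose proof (cond_pos d) as hd.
    assert (hs1 : s <= tau + d / 2) by apply Rmin_l.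
    assert (hs2 : s <= b) by apply Rmin_r.
    assert (hs3 : tau < s) by (apply Rmin_glb_lt; lra).
    assert (Es : E s).
    { split; [lra|]. intros u hu.
      destruct (Rlt_le_dec u tau) as [hut|htu]; [apply Hbelow; lra|].
      apply Hd, Rabs_lt_between'. lra. }
    specialize (Hub s Es). lra. }
  exists tau. repeat split; try assumption.
  destruct (Req_dec a tau) as [<-|]; lra.
Qed.

Lemma le_initial_while_below (psi dpsi : R -> R) (L : R) :
  (forall t, 0 < t -> is_derive psi t (dpsi t)) ->
  filterlim psi (at_right 0) (locally (psi 0)) ->
  (forall t, 0 < t -> psi t < L -> dpsi t <= 0) ->
  psi 0 < L -> forall t, 0 <= t -> psi t <= psi 0.
Proof.
  intros Hd H0 Hneg HL t1 ht1. apply Rnot_lt_le. intros Hup.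
  (* Let tau be the first time after a small s > 0 at which psi reaches a level c in
     (psi 0, L]; on [s, tau] psi stays below L, so the mean value theorem gives
     psi tau <= psi s < c. *)
  set (c := Rmin (psi t1) ((psi 0 + L) / 2)).
  assert (hc0 : psi 0 < c) by (apply Rmin_glb_lt; lra).
  assert (hcL : c < L) by (eapply Rle_lt_trans; [apply Rmin_r | lra]).
  assert (hct : c <= psi t1) by apply Rmin_l.
  assert (ht1' : 0 < t1) by (destruct (Req_dec t1 0) as [->|]; lra).
  destruct (H0 _ (open_lt c (psi 0) hc0)) as [d Hd0].
  pose proof (cond_pos d) as hd.
  set (s := Rmin d t1 / 2).
  assert (hs : 0 < s < t1) by (unfold s; split;
    [apply Rdiv_lt_0_compat; [apply Rmin_pos|]; lra | pose proof (Rmin_r d t1); lra]).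
  assert (Hs : psi s < c).
  { apply Hd0; [apply Rabs_lt_between' | ]; unfold s in *; pose proof (Rmin_l d t1); lra. }
  assert (Hcont : forall u, 0 < u -> continuous psi u)
    by (intros u hu; apply (@ex_derive_continuous R_AbsRing R_NormedModule);
        exists (dpsi u); auto).
  destruct (first_hitting_time psi s t1 c) as [tau [htau [Hctau Hbelow]]];
    [lra | intros u hu; apply Hcont; lra | lra | lra |].
  destruct (MVT_cor2 psi dpsi s tau) as [xi [Hmvt hxi]];
    [lra | intros u hu; apply is_derive_Reals, Hd; lra |].
  assert (dpsi xi <= 0) by (apply Hneg; [lra | pose proof (Hbelow xi ltac:(lra)); lra]).
  assert (dpsi xi * (tau - s) <= 0) by (apply Rmult_le_0_r; lra).
  lra.
Qed.

Lemma is_derive_value (f : R -> R) (t d1 d2 : R) :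
  is_derive f t d1 -> d1 = d2 -> is_derive f t d2.
Proof. intros Hf <-. exact Hf. Qed.

Lemma is_derive_Rconst (c t : R) : is_derive (fun _ => c) t 0.
Proof. exact (is_derive_const c t). Qed.

Lemma is_derive_Rplus (f g : R -> R) (t df dg : R) :
  is_derive f t df -> is_derive g t dg -> is_derive (fun s => f s + g s) t (df + dg).
Proof. exact (is_derive_plus f g t df dg). Qed.

Lemma is_derive_Rminus (f g : R -> R) (t df dg : R) :
  is_derive f t df -> is_derive g t dg -> is_derive (fun s => f s - g s) t (df - dg).
Proof. exact (is_derive_minus f g t df dg). Qed.

Lemma is_derive_Rmult (f g : R -> R) (t df dg : R) :
  is_derive f t df -> is_derive g t dg ->
  is_derive (fun s => f s * g s) t (df * g t + f t * dg).
Proof. intros Hf Hg. exact (is_derive_mult f g t df dg Hf Hg Rmult_comm). Qed.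

Lemma is_derive_Rsqr (f : R -> R) (t df : R) :
  is_derive f t df -> is_derive (fun s => f s ^ 2) t (2 * f t * df).
Proof.
  intros Hf. eapply is_derive_value; [exact (is_derive_pow f 2 t df Hf) | simpl; ring].
Qed.

Lemma is_derive_Rdiv_const (f : R -> R) (c t df : R) :
  is_derive f t df -> is_derive (fun s => f s / c) t (df / c).
Proof.
  intros Hf. eapply is_derive_value; [apply is_derive_Rmult; [exact Hf | apply is_derive_Rconst] |].
  unfold Rdiv. ring.
Qed.

Section FilterlimR.
Context {T : Type} {F : (T -> Prop) -> Prop} {FF : Filter F}.

Lemma filterlim_Rplus (f g : T -> R) (a b : R) :
  filterlim f F (locally a) -> filterlim g F (locally b) ->
  filterlim (fun s => f s + g s) F (locally (a + b)).
Proof.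
  intros Hf Hg. exact (filterlim_comp_2 f g Rplus Hf Hg (@filterlim_plus _ R_NormedModule a b)).
Qed.

Lemma filterlim_Rmult (f g : T -> R) (a b : R) :
  filterlim f F (locally a) -> filterlim g F (locally b) ->
  filterlim (fun s => f s * g s) F (locally (a * b)).
Proof.
  intros Hf Hg. exact (filterlim_comp_2 f g Rmult Hf Hg (@filterlim_mult R_AbsRing a b)).
Qed.

Lemma filterlim_Rsqr (f : T -> R) (a : R) :
  filterlim f F (locally a) -> filterlim (fun s => f s ^ 2) F (locally (a ^ 2)).
Proof.
  intros Hf. replace (a ^ 2) with (a * a) by ring.
  apply (filterlim_ext (fun s => f s * f s)); [intros s; ring |].
  exact (filterlim_Rmult f f a a Hf Hf).
Qed.

End FilterlimR.

Lemma decay_while_below (g dg : R -> R) (L kappa : R) :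
  0 < kappa ->
  (forall t, 0 < t -> is_derive g t (dg t)) ->
  filterlim g (at_right 0) (locally (g 0)) ->
  (forall t, 0 <= t -> 0 <= g t) ->
  (forall t, 0 < t -> g t < L -> dg t <= - kappa * g t) ->
  g 0 < L -> forall t, 0 <= t -> g t * (1 + kappa * t) <= g 0.
Proof.
  intros hk Hd H0 Hpos Hdec HL t ht.
  set (w := fun s => 1 + kappa * s).
  assert (Hw : forall s, is_derive w s kappa)
    by (intros s; unfold w; auto_derive; [exact I | ring]).
  assert (Hw0 : filterlim w (at_right 0) (locally (w 0))).
  { apply (filterlim_filter_le_1 _ (@filter_le_within R (locally 0) _ (fun s => 0 < s))).
    apply (@ex_derive_continuous R_AbsRing R_NormedModule). exists kappa; apply Hw. }
  assert (Hg_le : forall s, 0 <= s -> g s <= g s * w s).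
  { intros s hs. pose proof (Hpos s hs). assert (0 <= kappa * s) by nra. unfold w. nra. }
  replace (g 0) with (g 0 * w 0) by (unfold w; ring).
  apply (le_initial_while_below (fun s => g s * w s) (fun s => dg s * w s + g s * kappa) L);
    [ intros s hs; apply is_derive_Rmult; auto
    | exact (filterlim_Rmult _ _ _ _ H0 Hw0)
    | | unfold w; rewrite Rmult_0_r, Rplus_0_r, Rmult_1_r; exact HL | exact ht].
  intros s hs Hs.
  assert (Hgs : g s < L) by (pose proof (Hg_le s ltac:(lra)); lra).
  pose proof (Hdec s hs Hgs). pose proof (Hpos s ltac:(lra)).
  assert (0 <= kappa * s) by nra.
  assert (0 <= kappa * s * (kappa * g s)) by (apply Rmult_le_pos; nra).
  unfold w. nra.
Qed.

(** * Lyapunov functions and local asymptotic stability *)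

Lemma dist_state_nonneg (x y : state) : 0 <= dist_state x y.
Proof. eapply Rle_trans; [apply Rabs_pos | apply Rmax_l]. Qed.

Section LyapunovFunction.
Variables (F : state -> state) (E : state) (V D : state -> R) (a b L kappa : R).
Hypotheses (ha : 0 < a) (hb : 0 < b) (hL : 0 < L) (hkappa : 0 < kappa).
Hypothesis V_nonneg : forall x, 0 <= V x.
Hypothesis dist_le_V : forall x, dist_state x E ^ 2 <= a * V x.
Hypothesis V_le_dist : forall x, V x <= b * dist_state x E ^ 2.
Hypothesis V_derive : forall xs, is_solution F xs ->
  forall t, 0 < t -> is_derive (fun s => V (xs s)) t (D (xs t)).
Hypothesis V_right_cont : forall xs, is_solution F xs ->
  filterlim (fun s => V (xs s)) (at_right 0) (locally (V (xs 0))).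
Hypothesis D_le : forall x, V x < L -> D x <= - kappa * V x.

Lemma lyapunov_decay (xs : R -> state) : is_solution F xs -> V (xs 0) < L ->
  forall t, 0 <= t -> V (xs t) * (1 + kappa * t) <= V (xs 0).
Proof.
  intros Hxs. apply (decay_while_below (fun s => V (xs s)) (fun s => D (xs s))); auto.
Qed.

Lemma lyapunov_lt_near (B : R) : 0 < B ->
  exists d, 0 < d /\ forall x, dist_state x E < d -> V x < B.
Proof.
  intros hB. assert (hBb : 0 < B / b) by (apply Rdiv_lt_0_compat; lra).
  exists (sqrt (B / b)). split; [apply sqrt_lt_R0; exact hBb|].
  intros x Hx. pose proof (dist_state_nonneg x E). pose proof (sqrt_sqrt (B / b) (Rlt_le _ _ hBb)).
  assert (Hsq : dist_state x E ^ 2 < B / b) by nra.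
  eapply Rle_lt_trans; [apply V_le_dist|].
  apply (Rmult_lt_compat_l b) in Hsq; [|lra].
  replace (b * (B / b)) with B in Hsq by (field; lra). exact Hsq.
Qed.

Lemma dist_lt_of_lyapunov (x : state) (eps : R) :
  0 < eps -> a * V x < eps ^ 2 -> dist_state x E < eps.
Proof.
  intros heps Hx. pose proof (dist_le_V x). pose proof (dist_state_nonneg x E). nra.
Qed.

Lemma las_of_lyapunov : locally_asymptotically_stable F E.
Proof.
  split.
  - intros eps heps.
    assert (hB : 0 < Rmin L (eps ^ 2 / a)) by (apply Rmin_pos; [lra | apply Rdiv_lt_0_compat; nra]).
    destruct (lyapunov_lt_near _ hB) as [d [hd Hd]].
    exists d. split; [exact hd|]. intros xs Hxs Hx0 t ht.
    specialize (Hd _ Hx0).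
    assert (HV0 : V (xs 0) < L) by (eapply Rlt_le_trans; [exact Hd | apply Rmin_l]).
    assert (HVe : V (xs 0) < eps ^ 2 / a) by (eapply Rlt_le_trans; [exact Hd | apply Rmin_r]).
    pose proof (lyapunov_decay xs Hxs HV0 t ht). pose proof (V_nonneg (xs t)).
    apply dist_lt_of_lyapunov; [exact heps|].
    apply (Rmult_lt_compat_l a) in HVe; [|lra].
    replace (a * (eps ^ 2 / a)) with (eps ^ 2) in HVe by (field; lra).
    assert (0 <= kappa * t) by nra. nra.
  - destruct (lyapunov_lt_near _ hL) as [d [hd Hd]].
    exists d. split; [exact hd|]. intros xs Hxs Hx0.
    pose proof (Hd _ Hx0) as HV0.
    apply is_lim_spec. intros [eps heps]. simpl.
    pose proof (V_nonneg (xs 0)).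
    assert (hke : 0 < kappa * eps ^ 2) by (apply Rmult_lt_0_compat; [lra | apply pow_lt; lra]).
    assert (hM : 0 <= a * V (xs 0) / (kappa * eps ^ 2))
      by (apply Rle_mult_inv_pos; [nra | exact hke]).
    exists (a * V (xs 0) / (kappa * eps ^ 2)). intros t ht.
    rewrite Rminus_0_r, Rabs_pos_eq by apply dist_state_nonneg.
    apply dist_lt_of_lyapunov; [exact heps|].
    pose proof (lyapunov_decay xs Hxs HV0 t ltac:(lra)). pose proof (V_nonneg (xs t)).
    apply (Rmult_lt_compat_l (kappa * eps ^ 2)) in ht; [|exact hke].
    replace (kappa * eps ^ 2 * (a * V (xs 0) / (kappa * eps ^ 2))) with (a * V (xs 0)) in ht
      by (field; lra).
    assert (hkt : 0 <= kappa * t) by nra.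
    assert (a * (V (xs t) * (1 + kappa * t)) <= a * V (xs 0)) by (apply Rmult_le_compat_l; lra).
    apply Rnot_le_lt. intros Hge.
    assert (eps ^ 2 * (kappa * t) <= a * V (xs t) * (kappa * t)) by (apply Rmult_le_compat_r; lra).
    nra.
Qed.

End LyapunovFunction.

(** * The Lyapunov derivative in relative coordinates *)

Lemma young_le (t a b : R) : 0 < t -> 2 * a * b <= t * a ^ 2 + b ^ 2 / t.
Proof.
  intros ht.
  assert (Hsq : 0 <= (t * a - b) ^ 2 / t) by (apply Rle_mult_inv_pos; [apply pow2_ge_0 | exact ht]).
  replace ((t * a - b) ^ 2 / t) with (t * a ^ 2 + b ^ 2 / t - 2 * a * b) in Hsq by (field; lra).
  lra.
Qed.

Lemma abs_mul3_le (a b c d : R) : Rabs a <= d -> a * b * c <= d * (b ^ 2 + c ^ 2) / 2.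
Proof.
  intros Ha. pose proof (Rle_abs (a * (b * c))) as Habc. rewrite Rabs_mult in Habc.
  pose proof (Rabs_pos a). pose proof (Rabs_pos (b * c)).
  assert (Rabs (b * c) <= (b ^ 2 + c ^ 2) / 2).
  { rewrite Rabs_mult. pose proof (young_le 1 (Rabs b) (Rabs c) Rlt_0_1) as Hy.
    rewrite !pow2_abs in Hy. lra. }
  nra.
Qed.

Lemma neg_mul_affine_le (h j m P X Y : R) : 0 <= h -> 0 <= m -> 0 < j -> 0 < P ->
  - 2 * (h * X + j * Y) * (m * X + P * Y) <= (h * P + j * m) ^ 2 / (j * P) * X ^ 2 - j * P * Y ^ 2.
Proof.
  intros hh hm hj hP.
  pose proof (young_le (j * P) Y (- (h * P + j * m) * X) ltac:(nra)) as Hy.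
  replace ((- (h * P + j * m) * X) ^ 2 / (j * P)) with ((h * P + j * m) ^ 2 / (j * P) * X ^ 2)
    in Hy by (field; lra).
  assert (0 <= h * m * X ^ 2) by (apply Rmult_le_pos; [nra | apply pow2_ge_0]).
  nra.
Qed.

Lemma coupling_form_ge (X Z U : R) : (X ^ 2 + Z ^ 2) / 4 <= X ^ 2 + Z ^ 2 + U ^ 2 + X * U - Z * U.
Proof.
  pose proof (pow2_ge_0 (X + 2 / 3 * U)). pose proof (pow2_ge_0 (Z - 2 / 3 * U)).
  pose proof (pow2_ge_0 U). nra.
Qed.

Section ReducedRate.
Variables (h j g k P Q m1 m2 r mu : R).
Hypotheses (hh : 0 < h) (hj : 0 < j) (hg : 0 < g) (hk : 0 < k) (hP : 0 < P) (hQ : 0 < Q)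
  (hm1 : 0 <= m1) (hm2 : 0 <= m2) (hmu : 0 < mu).

(* At an equilibrium (h, j, _, g, k) with infection fluxes P = b_v k h and Q = b_h g j,
   half the derivative of [lyapunov] below (with c = P / Q) is quad_rate + P * cubic_rate
   evaluated at m1 = mu_h h, m2 = mu_v g, r = r_1 j, mu = mu_h, the relative deviations
   X, Y, Z, W of S_h, I_h, S_v, I_v and the absolute deviation p of R_h. *)
Definition quad_rate (e n X Y Z W p : R) : R :=
  - m1 * X ^ 2 - P / Q * m2 * Z ^ 2 - P * (X ^ 2 + Z ^ 2 + (W - Y) ^ 2 + X * (W - Y) - Z * (W - Y))
  - 2 * e * (h * X + j * Y) * (m1 * X + P * Y) - 2 * e * (g * Z + k * W) * (m2 * Z + Q * W)
  + 2 * n * p * (r * Y - mu * p).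

Definition cubic_rate (X Y Z W : R) : R := X * W * (Y - X) + Z * Y * (W - Z).

Let K1 := (h * P + j * m1) ^ 2 / (j * P).
Let K2 := (g * Q + k * m2) ^ 2 / (k * Q).

Lemma quad_rate_le_diag (e n X Y Z W p : R) :
  0 <= e -> 0 <= n -> e * K1 <= P / 8 -> e * K2 <= P / 8 -> n * (r ^ 2 / mu) <= e * j * P / 2 ->
  quad_rate e n X Y Z W p <=
  - (P / 8) * (X ^ 2 + Z ^ 2) - (e * j * P / 2) * Y ^ 2 - (e * k * Q) * W ^ 2 - (n * mu) * p ^ 2.
Proof.
  intros he hn heK1 heK2 hnr.
  pose proof (coupling_form_ge X Z (W - Y)) as Hcoup.
  pose proof (neg_mul_affine_le h j m1 P X Y (Rlt_le _ _ hh) hm1 hj hP) as Hhum.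
  pose proof (neg_mul_affine_le g k m2 Q Z W (Rlt_le _ _ hg) hm2 hk hQ) as Hvec.
  pose proof (young_le mu p (r * Y) hmu) as Hrec.
  fold K1 in Hhum. fold K2 in Hvec.
  unfold quad_rate.
  pose proof (pow2_ge_0 X). pose proof (pow2_ge_0 Y). pose proof (pow2_ge_0 Z).
  assert (0 <= m1 * X ^ 2) by (apply Rmult_le_pos; lra).
  assert (0 <= P / Q * m2 * Z ^ 2)
    by (apply Rmult_le_pos; [apply Rmult_le_pos; [apply Rlt_le, Rdiv_lt_0_compat|]|]; lra).
  apply (Rmult_le_compat_l e) in Hhum, Hvec; try lra.
  apply (Rmult_le_compat_l P) in Hcoup; [|lra].
  apply (Rmult_le_compat_l n) in Hrec; [|lra].
  replace ((r * Y) ^ 2 / mu) with (r ^ 2 / mu * Y ^ 2) in Hrec by (field; lra).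
  assert (e * K1 * X ^ 2 <= P / 8 * X ^ 2) by (apply Rmult_le_compat_r; lra).
  assert (e * K2 * Z ^ 2 <= P / 8 * Z ^ 2) by (apply Rmult_le_compat_r; lra).
  assert (n * (r ^ 2 / mu) * Y ^ 2 <= e * j * P / 2 * Y ^ 2) by (apply Rmult_le_compat_r; lra).
  lra.
Qed.

Lemma quad_rate_neg_def : exists e n c0, 0 < e /\ 0 < n /\ 0 < c0 /\
  forall X Y Z W p, quad_rate e n X Y Z W p <= - c0 * (X ^ 2 + Y ^ 2 + Z ^ 2 + W ^ 2 + p ^ 2).
Proof.
  (* e is small enough for the cross terms of the total-population squares to be absorbed
     by P (X^2 + Z^2) / 4, and n small enough for the recovery coupling r Y p to be absorbed
     by the resulting e j P Y^2. *)
  assert (hK1 : 0 <= K1) by (apply Rle_mult_inv_pos; [apply pow2_ge_0 | nra]).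
  assert (hK2 : 0 <= K2) by (apply Rle_mult_inv_pos; [apply pow2_ge_0 | nra]).
  set (e := P / (8 * (K1 + K2 + 1))).
  assert (he : 0 < e) by (apply Rdiv_lt_0_compat; lra).
  assert (heK : 8 * e * (K1 + K2 + 1) = P) by (unfold e; field; lra).
  clearbody e.
  assert (hejP : 0 < e * j * P) by (repeat apply Rmult_lt_0_compat; lra).
  assert (hekQ : 0 < e * k * Q) by (repeat apply Rmult_lt_0_compat; lra).
  pose proof (pow2_ge_0 r) as hr2.
  set (n := e * j * P * mu / (2 * (r ^ 2 + 1))).
  assert (hn : 0 < n) by (apply Rdiv_lt_0_compat; nra).
  assert (hnr : n * (r ^ 2 / mu) <= e * j * P / 2).
  { replace (e * j * P / 2) with (n * (r ^ 2 / mu) + e * j * P / (2 * (r ^ 2 + 1)))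
      by (unfold n; field; lra).
    assert (0 < e * j * P / (2 * (r ^ 2 + 1))) by (apply Rdiv_lt_0_compat; lra).
    lra. }
  clearbody n.
  set (c0 := Rmin (Rmin (P / 8) (e * j * P / 2)) (Rmin (e * k * Q) (n * mu))).
  exists e, n, c0. split; [exact he | split; [exact hn | split]].
  { unfold c0. repeat apply Rmin_pos; nra. }
  intros X Y Z W p.
  pose proof (quad_rate_le_diag e n X Y Z W p ltac:(lra) ltac:(lra) ltac:(nra) ltac:(nra) hnr).
  assert (c0 <= P / 8) by (unfold c0; eapply Rle_trans; apply Rmin_l).
  assert (c0 <= e * j * P / 2) by (unfold c0; eapply Rle_trans; [apply Rmin_l | apply Rmin_r]).
  assert (c0 <= e * k * Q) by (unfold c0; eapply Rle_trans; [apply Rmin_r | apply Rmin_l]).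
  assert (c0 <= n * mu) by (unfold c0; eapply Rle_trans; apply Rmin_r).
  pose proof (pow2_ge_0 X). pose proof (pow2_ge_0 Y). pose proof (pow2_ge_0 Z).
  pose proof (pow2_ge_0 W). pose proof (pow2_ge_0 p).
  nra.
Qed.

Lemma cubic_rate_le (d X Y Z W : R) :
  Rabs X <= d -> Rabs Y <= d -> Rabs Z <= d -> Rabs W <= d ->
  cubic_rate X Y Z W <= 2 * d * (X ^ 2 + Y ^ 2 + Z ^ 2 + W ^ 2).
Proof.
  intros HX HY HZ HW. unfold cubic_rate.
  pose proof (abs_mul3_le W X Y d HW). pose proof (abs_mul3_le Y Z W d HY).
  pose proof (Rle_abs (- W)). pose proof (Rle_abs (- Y)). rewrite Rabs_Ropp in *.
  assert (0 <= (d + W) * X ^ 2) by (apply Rmult_le_pos; [lra | apply pow2_ge_0]).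
  assert (0 <= (d + Y) * Z ^ 2) by (apply Rmult_le_pos; [lra | apply pow2_ge_0]).
  pose proof (pow2_ge_0 Y). pose proof (pow2_ge_0 W).
  assert (0 <= d) by (pose proof (Rabs_pos X); lra).
  nra.
Qed.

Lemma rate_neg_def_near_zero : exists e n d c1, 0 < e /\ 0 < n /\ 0 < d /\ 0 < c1 /\
  forall X Y Z W p, Rabs X <= d -> Rabs Y <= d -> Rabs Z <= d -> Rabs W <= d ->
  quad_rate e n X Y Z W p + P * cubic_rate X Y Z W
  <= - c1 * (X ^ 2 + Y ^ 2 + Z ^ 2 + W ^ 2 + p ^ 2).
Proof.
  destruct quad_rate_neg_def as (e & n & c0 & he & hn & hc0 & Hquad).
  exists e, n, (c0 / (4 * P)), (c0 / 2).
  split; [exact he | split; [exact hn | split; [apply Rdiv_lt_0_compat; lra | split; [lra |]]]].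
  intros X Y Z W p HX HY HZ HW.
  pose proof (cubic_rate_le _ _ _ _ _ HX HY HZ HW) as Hcub.
  apply (Rmult_le_compat_l P) in Hcub; [|lra].
  replace (P * (2 * (c0 / (4 * P)) * (X ^ 2 + Y ^ 2 + Z ^ 2 + W ^ 2)))
    with (c0 / 2 * (X ^ 2 + Y ^ 2 + Z ^ 2 + W ^ 2)) in Hcub by (field; lra).
  pose proof (Hquad X Y Z W p). pose proof (pow2_ge_0 p).
  nra.
Qed.

End ReducedRate.

(** * A Lyapunov function for the malaria model *)

Definition lyapunov (E : state) (c e n : R) (x : state) : R :=
  (Sh x - Sh E) ^ 2 / Sh E + (Ih x - Ih E) ^ 2 / Ih E
  + c * ((Sv x - Sv E) ^ 2 / Sv E + (Iv x - Iv E) ^ 2 / Iv E)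
  + 2 * e * (Sh x + Ih x - (Sh E + Ih E)) ^ 2 + 2 * e * (Sv x + Iv x - (Sv E + Iv E)) ^ 2
  + 2 * n * (Rh x - Rh E) ^ 2.

Definition lyapunov_deriv (E : state) (c e n : R) (x v : state) : R :=
  2 * ((Sh x - Sh E) * Sh v / Sh E + (Ih x - Ih E) * Ih v / Ih E
  + c * ((Sv x - Sv E) * Sv v / Sv E + (Iv x - Iv E) * Iv v / Iv E)
  + 2 * e * (Sh x + Ih x - (Sh E + Ih E)) * (Sh v + Ih v)
  + 2 * e * (Sv x + Iv x - (Sv E + Iv E)) * (Sv v + Iv v)
  + 2 * n * (Rh x - Rh E) * Rh v).

(* These dispatch on the syntactic shape of the term: letting [apply] unify against
   Rplus or Rmult makes it unfold the definitions of the real operations. *)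
Ltac derive_poly :=
  repeat match goal with
  | |- is_derive (fun _ => ?c) _ _ => apply (is_derive_Rconst c)
  | |- is_derive (fun s => @?f s + @?g s) _ _ => apply (is_derive_Rplus f g)
  | |- is_derive (fun s => @?f s - @?g s) _ _ => apply (is_derive_Rminus f g)
  | |- is_derive (fun s => @?f s * @?g s) _ _ => apply (is_derive_Rmult f g)
  | |- is_derive (fun s => @?f s / ?c) _ _ => apply (is_derive_Rdiv_const f c)
  | |- is_derive (fun s => @?f s ^ 2) _ _ => apply (is_derive_Rsqr f)
  | |- is_derive _ _ _ => eassumption
  end.

Ltac limit_poly :=
  repeat match goal with
  | |- filterlim (fun _ => ?c) _ _ => apply (filterlim_const c)
  | |- filterlim (fun s => @?f s + @?g s) _ _ => apply (filterlim_Rplus f g)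
  | |- filterlim (fun s => @?f s * @?g s) _ _ => apply (filterlim_Rmult f g)
  | |- filterlim (fun s => @?f s ^ 2) _ _ => apply (filterlim_Rsqr f)
  | |- filterlim _ _ _ => eassumption
  end.

Lemma is_derive_lyapunov (F : state -> state) (E : state) (c e n : R) (xs : R -> state) (t : R) :
  is_solution F xs -> 0 < t ->
  is_derive (fun s => lyapunov E c e n (xs s)) t (lyapunov_deriv E c e n (xs t) (F (xs t))).
Proof.
  intros [[dSh _] [[dIh _] [[dRh _] [[dSv _] [dIv _]]]]] ht.
  specialize (dSh t ht). specialize (dIh t ht). specialize (dRh t ht).
  specialize (dSv t ht). specialize (dIv t ht).
  eapply is_derive_value; [unfold lyapunov; derive_poly |].
  unfold lyapunov_deriv, Rdiv. ring.
Qed.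

Lemma filterlim_lyapunov (F : state -> state) (E : state) (c e n : R) (xs : R -> state) :
  is_solution F xs ->
  filterlim (fun s => lyapunov E c e n (xs s)) (at_right 0) (locally (lyapunov E c e n (xs 0))).
Proof.
  intros [[_ lSh] [[_ lIh] [[_ lRh] [[_ lSv] [_ lIv]]]]].
  unfold lyapunov, Rdiv, Rminus. limit_poly.
Qed.

Definition sq_dev (x y : state) : R :=
  (Sh x - Sh y) ^ 2 + (Ih x - Ih y) ^ 2 + (Rh x - Rh y) ^ 2 + (Sv x - Sv y) ^ 2 + (Iv x - Iv y) ^ 2.

Definition rel_dev (u u0 : R) : R := (u - u0) / u0.

(* R_h enters through its absolute deviation: R_h* = 0 when r_1 = 0. *)
Definition rel_sq_dev (x y : state) : R :=
  rel_dev (Sh x) (Sh y) ^ 2 + rel_dev (Ih x) (Ih y) ^ 2 + rel_dev (Sv x) (Sv y) ^ 2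
  + rel_dev (Iv x) (Iv y) ^ 2 + (Rh x - Rh y) ^ 2.

Lemma dist_state_sqr_le_sq_dev (x y : state) : dist_state x y ^ 2 <= sq_dev x y.
Proof.
  pose proof (pow2_ge_0 (Sh x - Sh y)). pose proof (pow2_ge_0 (Ih x - Ih y)).
  pose proof (pow2_ge_0 (Rh x - Rh y)). pose proof (pow2_ge_0 (Sv x - Sv y)).
  pose proof (pow2_ge_0 (Iv x - Iv y)).
  unfold dist_state, sq_dev.
  repeat (apply (Rmax_case _ _ (fun z => z ^ 2 <= _)); [rewrite pow2_abs; lra |]).
  rewrite pow2_abs; lra.
Qed.

Lemma dev_le_dist_state (x y : state) :
  Rabs (Sh x - Sh y) <= dist_state x y /\ Rabs (Ih x - Ih y) <= dist_state x y /\
  Rabs (Rh x - Rh y) <= dist_state x y /\ Rabs (Sv x - Sv y) <= dist_state x y /\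
  Rabs (Iv x - Iv y) <= dist_state x y.
Proof.
  unfold dist_state.
  repeat split; repeat first [apply Rmax_l | apply Rmax_r | eapply Rle_trans; [| apply Rmax_r]].
Qed.

Lemma sq_dev_le_dist_state (x y : state) : sq_dev x y <= 5 * dist_state x y ^ 2.
Proof.
  assert (H : forall u, Rabs u <= dist_state x y -> u ^ 2 <= dist_state x y ^ 2).
  { intros u Hu. rewrite <- pow2_abs. apply pow_incr. split; [apply Rabs_pos | exact Hu]. }
  destruct (dev_le_dist_state x y) as (H1 & H2 & H3 & H4 & H5).
  apply H in H1, H2, H3, H4, H5. unfold sq_dev. lra.
Qed.

Lemma Rabs_rel_dev_le (u u0 d : R) :
  0 < u0 -> 0 <= d -> (u - u0) ^ 2 <= (d * u0) ^ 2 -> Rabs (rel_dev u u0) <= d.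
Proof.
  intros hu0 hd Hu. rewrite <- pow2_abs in Hu. pose proof (Rabs_pos (u - u0)).
  assert (0 <= d * u0) by nra.
  assert (Rabs (u - u0) <= d * u0) by nra.
  unfold rel_dev, Rdiv. rewrite Rabs_mult, Rabs_inv, (Rabs_pos_eq u0) by lra.
  apply (Rmult_le_reg_r u0); [lra |]. rewrite Rmult_assoc, Rinv_l, Rmult_1_r; lra.
Qed.

Section LyapunovBounds.
Variables (E : state) (c e n : R).
Hypotheses (hSh : 0 < Sh E) (hIh : 0 < Ih E) (hSv : 0 < Sv E) (hIv : 0 < Iv E)
  (hc : 0 < c) (he : 0 < e) (hn : 0 < n).

Lemma lyapunov_nonneg (x : state) : 0 <= lyapunov E c e n x.
Proof.
  unfold lyapunov.
  assert (Hq : forall u w, 0 < w -> 0 <= u ^ 2 / w)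
    by (intros u w hw; apply Rle_mult_inv_pos; [apply pow2_ge_0 | exact hw]).
  pose proof (Hq (Sh x - Sh E) _ hSh). pose proof (Hq (Ih x - Ih E) _ hIh).
  pose proof (Hq (Sv x - Sv E) _ hSv). pose proof (Hq (Iv x - Iv E) _ hIv).
  pose proof (pow2_ge_0 (Sh x + Ih x - (Sh E + Ih E))).
  pose proof (pow2_ge_0 (Sv x + Iv x - (Sv E + Iv E))). pose proof (pow2_ge_0 (Rh x - Rh E)).
  nra.
Qed.

Lemma sq_dev_le_lyapunov : exists a, 0 < a /\ forall x, sq_dev x E <= a * lyapunov E c e n x.
Proof.
  exists (Sh E + Ih E + Sv E / c + Iv E / c + 1 / (2 * n)). split.
  { assert (0 < Sv E / c) by (apply Rdiv_lt_0_compat; lra).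
    assert (0 < Iv E / c) by (apply Rdiv_lt_0_compat; lra).
    assert (0 < 1 / (2 * n)) by (apply Rdiv_lt_0_compat; lra). lra. }
  intros x. pose proof (lyapunov_nonneg x) as HV. unfold sq_dev.
  set (t1 := (Sh x - Sh E) ^ 2 / Sh E). set (t2 := (Ih x - Ih E) ^ 2 / Ih E).
  set (t3 := c * ((Sv x - Sv E) ^ 2 / Sv E)). set (t4 := c * ((Iv x - Iv E) ^ 2 / Iv E)).
  set (t5 := 2 * n * (Rh x - Rh E) ^ 2).
  set (t6 := 2 * e * (Sh x + Ih x - (Sh E + Ih E)) ^ 2 + 2 * e * (Sv x + Iv x - (Sv E + Iv E)) ^ 2).
  assert (HV' : lyapunov E c e n x = t1 + t2 + t3 + t4 + t5 + t6)
    by (unfold lyapunov, t1, t2, t3, t4, t5, t6, Rdiv; ring).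
  assert (0 <= t1) by (apply Rle_mult_inv_pos; [apply pow2_ge_0 | lra]).
  assert (0 <= t2) by (apply Rle_mult_inv_pos; [apply pow2_ge_0 | lra]).
  assert (0 <= t3) by (apply Rmult_le_pos; [lra | apply Rle_mult_inv_pos; [apply pow2_ge_0 | lra]]).
  assert (0 <= t4) by (apply Rmult_le_pos; [lra | apply Rle_mult_inv_pos; [apply pow2_ge_0 | lra]]).
  assert (0 <= t5) by (apply Rmult_le_pos; [lra | apply pow2_ge_0]).
  assert (0 <= t6)
    by (apply Rplus_le_le_0_compat; apply Rmult_le_pos;
        [lra | apply pow2_ge_0 | lra | apply pow2_ge_0]).
  replace ((Sh x - Sh E) ^ 2 + (Ih x - Ih E) ^ 2 + (Rh x - Rh E) ^ 2 + (Sv x - Sv E) ^ 2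
           + (Iv x - Iv E) ^ 2)
    with (Sh E * t1 + Ih E * t2 + Sv E / c * t3 + Iv E / c * t4 + 1 / (2 * n) * t5)
    by (unfold t1, t2, t3, t4, t5; field; repeat split; lra).
  rewrite HV'.
  assert (Sv E / c * t3 <= Sv E / c * (t1 + t2 + t3 + t4 + t5 + t6))
    by (apply Rmult_le_compat_l; [apply Rlt_le, Rdiv_lt_0_compat |]; lra).
  assert (Iv E / c * t4 <= Iv E / c * (t1 + t2 + t3 + t4 + t5 + t6))
    by (apply Rmult_le_compat_l; [apply Rlt_le, Rdiv_lt_0_compat |]; lra).
  assert (1 / (2 * n) * t5 <= 1 / (2 * n) * (t1 + t2 + t3 + t4 + t5 + t6))
    by (apply Rmult_le_compat_l; [apply Rlt_le, Rdiv_lt_0_compat |]; lra).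
  nra.
Qed.

Lemma lyapunov_le_sq_dev : exists b, 0 < b /\ forall x, lyapunov E c e n x <= b * sq_dev x E.
Proof.
  exists (/ Sh E + / Ih E + c / Sv E + c / Iv E + 4 * e + 2 * n). split.
  { assert (0 < c / Sv E) by (apply Rdiv_lt_0_compat; lra).
    assert (0 < c / Iv E) by (apply Rdiv_lt_0_compat; lra).
    pose proof (Rinv_0_lt_compat _ hSh). pose proof (Rinv_0_lt_compat _ hIh). lra. }
  intros x. unfold lyapunov, sq_dev.
  set (u1 := Sh x - Sh E). set (u2 := Ih x - Ih E). set (u3 := Rh x - Rh E).
  set (u4 := Sv x - Sv E). set (u5 := Iv x - Iv E).
  replace (Sh x + Ih x - (Sh E + Ih E)) with (u1 + u2) by (unfold u1, u2; ring).
  replace (Sv x + Iv x - (Sv E + Iv E)) with (u4 + u5) by (unfold u4, u5; ring).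
  assert ((u1 + u2) ^ 2 <= 2 * u1 ^ 2 + 2 * u2 ^ 2) by (pose proof (pow2_ge_0 (u1 - u2)); nra).
  assert ((u4 + u5) ^ 2 <= 2 * u4 ^ 2 + 2 * u5 ^ 2) by (pose proof (pow2_ge_0 (u4 - u5)); nra).
  pose proof (pow2_ge_0 u1). pose proof (pow2_ge_0 u2). pose proof (pow2_ge_0 u3).
  pose proof (pow2_ge_0 u4). pose proof (pow2_ge_0 u5).
  assert (0 <= c / Sv E) by (apply Rlt_le, Rdiv_lt_0_compat; lra).
  assert (0 <= c / Iv E) by (apply Rlt_le, Rdiv_lt_0_compat; lra).
  pose proof (Rinv_0_lt_compat _ hSh). pose proof (Rinv_0_lt_compat _ hIh).
  replace (c * (u4 ^ 2 / Sv E + u5 ^ 2 / Iv E)) with (c / Sv E * u4 ^ 2 + c / Iv E * u5 ^ 2)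
    by (field; lra).
  unfold Rdiv. nra.
Qed.

Lemma sq_dev_le_rel_sq_dev (x : state) :
  sq_dev x E <= (Sh E ^ 2 + Ih E ^ 2 + Sv E ^ 2 + Iv E ^ 2 + 1) * rel_sq_dev x E.
Proof.
  unfold sq_dev, rel_sq_dev.
  replace (Sh x - Sh E) with (Sh E * rel_dev (Sh x) (Sh E)) by (unfold rel_dev; field; lra).
  replace (Ih x - Ih E) with (Ih E * rel_dev (Ih x) (Ih E)) by (unfold rel_dev; field; lra).
  replace (Sv x - Sv E) with (Sv E * rel_dev (Sv x) (Sv E)) by (unfold rel_dev; field; lra).
  replace (Iv x - Iv E) with (Iv E * rel_dev (Iv x) (Iv E)) by (unfold rel_dev; field; lra).
  pose proof (pow2_ge_0 (rel_dev (Sh x) (Sh E))). pose proof (pow2_ge_0 (rel_dev (Ih x) (Ih E))).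
  pose proof (pow2_ge_0 (rel_dev (Sv x) (Sv E))). pose proof (pow2_ge_0 (rel_dev (Iv x) (Iv E))).
  pose proof (pow2_ge_0 (Rh x - Rh E)).
  pose proof (pow2_ge_0 (Sh E)). pose proof (pow2_ge_0 (Ih E)).
  pose proof (pow2_ge_0 (Sv E)). pose proof (pow2_ge_0 (Iv E)).
  rewrite !Rpow_mult_distr. nra.
Qed.

Lemma lyapunov_le_rel_sq_dev :
  exists K, 0 < K /\ forall x, lyapunov E c e n x <= K * rel_sq_dev x E.
Proof.
  destruct lyapunov_le_sq_dev as (b & hb & Hb).
  set (M := Sh E ^ 2 + Ih E ^ 2 + Sv E ^ 2 + Iv E ^ 2 + 1).
  assert (hM : 0 < M) by (unfold M; pose proof (pow2_ge_0 (Sh E)); pose proof (pow2_ge_0 (Ih E));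
    pose proof (pow2_ge_0 (Sv E)); pose proof (pow2_ge_0 (Iv E)); lra).
  exists (b * M). split; [nra |]. intros x.
  pose proof (sq_dev_le_rel_sq_dev x) as Hrel. fold M in Hrel.
  apply (Rmult_le_compat_l b) in Hrel; [| lra].
  rewrite Rmult_assoc. exact (Rle_trans _ _ _ (Hb x) Hrel).
Qed.

Lemma lyapunov_small_rel_dev (d : R) : 0 < d ->
  exists L, 0 < L /\ forall x, lyapunov E c e n x < L ->
    Rabs (rel_dev (Sh x) (Sh E)) <= d /\ Rabs (rel_dev (Ih x) (Ih E)) <= d /\
    Rabs (rel_dev (Sv x) (Sv E)) <= d /\ Rabs (rel_dev (Iv x) (Iv E)) <= d.
Proof.
  intros hd. destruct sq_dev_le_lyapunov as (a & ha & Ha).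
  set (m := Rmin (Rmin (Sh E) (Ih E)) (Rmin (Sv E) (Iv E))).
  assert (hm : 0 < m) by (unfold m; repeat apply Rmin_pos; lra).
  exists ((d * m) ^ 2 / a). split; [apply Rdiv_lt_0_compat; [apply pow_lt; nra | lra] |].
  intros x HV.
  assert (Hsq : sq_dev x E < (d * m) ^ 2).
  { apply (Rmult_lt_compat_l a) in HV; [| lra].
    replace (a * ((d * m) ^ 2 / a)) with ((d * m) ^ 2) in HV by (field; lra).
    pose proof (Ha x). lra. }
  assert (Hcomp : forall u u0, 0 < u0 -> m <= u0 -> (u - u0) ^ 2 <= sq_dev x E ->
                  Rabs (rel_dev u u0) <= d).
  { intros u u0 hu0 hmu0 Hu. apply Rabs_rel_dev_le; [lra | lra |].
    assert ((d * m) ^ 2 <= (d * u0) ^ 2) by (apply pow_incr; nra). lra. }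
  assert (m <= Sh E) by (unfold m; eapply Rle_trans; apply Rmin_l).
  assert (m <= Ih E) by (unfold m; eapply Rle_trans; [apply Rmin_l | apply Rmin_r]).
  assert (m <= Sv E) by (unfold m; eapply Rle_trans; [apply Rmin_r | apply Rmin_l]).
  assert (m <= Iv E) by (unfold m; eapply Rle_trans; apply Rmin_r).
  pose proof (pow2_ge_0 (Sh x - Sh E)). pose proof (pow2_ge_0 (Ih x - Ih E)).
  pose proof (pow2_ge_0 (Rh x - Rh E)). pose proof (pow2_ge_0 (Sv x - Sv E)).
  pose proof (pow2_ge_0 (Iv x - Iv E)).
  unfold sq_dev in Hcomp.
  repeat split; apply Hcomp; lra.
Qed.

End LyapunovBounds.

Section EndemicLyapunov.
Variables (Lh Lv muh muv bh bv delta r1 : R) (E : state).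
Hypotheses (hmuh : 0 < muh) (hbh : 0 < bh) (hbv : 0 < bv).
Hypothesis hE : is_equilibrium (malaria_field Lh Lv muh muv bh bv delta r1) E.
Hypotheses (hSh : 0 < Sh E) (hIh : 0 < Ih E) (hSv : 0 < Sv E) (hIv : 0 < Iv E).

Let F := malaria_field Lh Lv muh muv bh bv delta r1.
Let P := bv * Iv E * Sh E.
Let Q := bh * Sv E * Ih E.

Lemma malaria_lyapunov_deriv (e n : R) (x : state) :
  lyapunov_deriv E (P / Q) e n x (F x) =
  2 * (quad_rate (Sh E) (Ih E) (Sv E) (Iv E) P Q (muh * Sh E) (muv * Sv E) (r1 * Ih E) muh e n
         (rel_dev (Sh x) (Sh E)) (rel_dev (Ih x) (Ih E)) (rel_dev (Sv x) (Sv E))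
         (rel_dev (Iv x) (Iv E)) (Rh x - Rh E)
       + P * cubic_rate (rel_dev (Sh x) (Sh E)) (rel_dev (Ih x) (Ih E)) (rel_dev (Sv x) (Sv E))
               (rel_dev (Iv x) (Iv E))).
Proof.
  unfold is_equilibrium, malaria_field, origin in hE.
  injection hE as E1 E2 E3 E4 E5.
  assert (HP : P = (muh + delta + r1) * Ih E) by (unfold P; lra).
  assert (HQ : Q = muv * Iv E) by (unfold Q; lra).
  assert (HR : r1 * Ih E = muh * Rh E) by lra.
  unfold lyapunov_deriv, F, malaria_field, quad_rate, cubic_rate, rel_dev; cbn [Sh Ih Rh Sv Iv].
  replace Lh with (P + muh * Sh E) by (unfold P; lra).
  replace Lv with (Q + muv * Sv E) by (unfold Q; lra).
  replace delta with (P / Ih E - muh - r1) by (rewrite HP; field; lra).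
  replace (Rh E) with (r1 * Ih E / muh) by (rewrite HR; field; lra).
  replace muv with (Q / Iv E) by (rewrite HQ; field; lra).
  unfold P, Q. field. repeat split; lra.
Qed.

Lemma malaria_lyapunov_rate : exists e n L kappa, 0 < e /\ 0 < n /\ 0 < L /\ 0 < kappa /\
  forall x, lyapunov E (P / Q) e n x < L ->
    lyapunov_deriv E (P / Q) e n x (F x) <= - kappa * lyapunov E (P / Q) e n x.
Proof.
  assert (hP : 0 < P) by (unfold P; repeat apply Rmult_lt_0_compat; lra).
  assert (hQ : 0 < Q) by (unfold Q; repeat apply Rmult_lt_0_compat; lra).
  assert (hmuv : 0 <= muv).
  { unfold is_equilibrium, malaria_field, origin in hE. injection hE as _ _ _ _ E5.
    fold Q in E5. nra. }
  assert (hc : 0 < P / Q) by (apply Rdiv_lt_0_compat; lra).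
  destruct (rate_neg_def_near_zero (Sh E) (Ih E) (Sv E) (Iv E) P Q (muh * Sh E) (muv * Sv E)
              (r1 * Ih E) muh) as (e & n & d & c1 & he & hn & hd & hc1 & Hrate); try nra.
  destruct (lyapunov_le_rel_sq_dev E (P / Q) e n hSh hIh hSv hIv hc he hn) as (K & hK & HK).
  destruct (lyapunov_small_rel_dev E (P / Q) e n hSh hIh hSv hIv hc he hn d hd) as (L & hL & HL).
  exists e, n, L, (2 * c1 / K).
  split; [lra | split; [lra | split; [lra | split; [apply Rdiv_lt_0_compat; lra |]]]].
  intros x HV. rewrite malaria_lyapunov_deriv.
  destruct (HL x HV) as (HX & HY & HZ & HW).
  specialize (Hrate _ _ _ _ (Rh x - Rh E) HX HY HZ HW).
  pose proof (HK x) as HVK. unfold rel_sq_dev in HVK.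
  apply (Rmult_le_compat_l (2 * c1 / K)) in HVK; [| apply Rlt_le, Rdiv_lt_0_compat; lra].
  rewrite <- Rmult_assoc in HVK. replace (2 * c1 / K * K) with (2 * c1) in HVK by (field; lra).
  lra.
Qed.

Theorem malaria_endemic_las : locally_asymptotically_stable F E.
Proof.
  destruct malaria_lyapunov_rate as (e & n & L & kappa & he & hn & hL & hkappa & Hrate).
  assert (hc : 0 < P / Q)
    by (apply Rdiv_lt_0_compat; unfold P, Q; repeat apply Rmult_lt_0_compat; lra).
  destruct (sq_dev_le_lyapunov E (P / Q) e n hSh hIh hSv hIv hc he hn) as (a & ha & Ha).
  destruct (lyapunov_le_sq_dev E (P / Q) e n hSh hIh hSv hIv hc he hn) as (b & hb & Hb).
  apply (las_of_lyapunov F E (lyapunov E (P / Q) e n)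
           (fun x => lyapunov_deriv E (P / Q) e n x (F x))
           a (5 * b) L kappa); try lra.
  - intros x. apply lyapunov_nonneg; lra.
  - intros x. eapply Rle_trans; [apply dist_state_sqr_le_sq_dev | apply Ha].
  - intros x. eapply Rle_trans; [apply Hb |]. pose proof (sq_dev_le_dist_state x E). nra.
  - intros xs Hxs t ht. exact (is_derive_lyapunov F E _ e n xs t Hxs ht).
  - intros xs Hxs. exact (filterlim_lyapunov F E _ e n xs Hxs).
  - exact Hrate.
Qed.

End EndemicLyapunov.

(** * Equilibria *)

Section Equilibria.
Variables (Lh Lv muh muv bh bv delta r1 : R).
Hypotheses (hLv : 0 < Lv) (hmuh : 0 < muh) (hmuv : 0 < muv).

Lemma DFE_is_equilibrium :
  is_equilibrium (malaria_field Lh Lv muh muv bh bv delta r1) (DFE Lh Lv muh muv).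
Proof.
  unfold is_equilibrium, malaria_field, DFE, origin; cbn [Sh Ih Rh Sv Iv].
  f_equal; field; lra.
Qed.

Lemma malaria_equilibrium_eq_of_Ih (E1 E2 : state) :
  is_equilibrium (malaria_field Lh Lv muh muv bh bv delta r1) E1 ->
  is_equilibrium (malaria_field Lh Lv muh muv bh bv delta r1) E2 ->
  Ih E1 = Ih E2 -> E1 = E2.
Proof.
  destruct E1 as [s i r sv iv], E2 as [s' i' r' sv' iv'].
  unfold is_equilibrium, malaria_field, origin; cbn [Sh Ih Rh Sv Iv].
  intros H1 H2 <-. injection H1 as A1 A2 A3 A4 A5. injection H2 as B1 B2 B3 B4 B5.
  assert (hsv : sv * (muv + bh * i) = sv' * (muv + bh * i)) by lra.
  assert (hi : muv + bh * i <> 0) by (intros H0; rewrite H0 in hsv; nra).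
  apply Rmult_eq_reg_r in hsv; [subst sv' | exact hi].
  f_equal; [apply (Rmult_eq_reg_l muh) | apply (Rmult_eq_reg_l muh) | apply (Rmult_eq_reg_l muv)];
    lra.
Qed.

Lemma malaria_equilibrium_Ih (E : state) :
  is_equilibrium (malaria_field Lh Lv muh muv bh bv delta r1) E -> Ih E <> 0 ->
  (muh + delta + r1) * bh * (muh * muv + bv * Lv) * Ih E
  = bv * bh * Lv * Lh - (muh + delta + r1) * muh * muv ^ 2.
Proof.
  destruct E as [s i r sv iv].
  unfold is_equilibrium, malaria_field, origin; cbn [Sh Ih Rh Sv Iv].
  intros H hi. injection H as A1 A2 A3 A4 A5.
  set (a := muh + delta + r1) in *.
  assert (Hvec : a * muv = bv * bh * s * sv).
  { apply (Rmult_eq_reg_r i); [| exact hi].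
    transitivity (bv * s * (muv * iv)); [| replace (muv * iv) with (bh * sv * i) by lra; ring].
    replace (a * muv * i) with (muv * (a * i)) by ring.
    replace (a * i) with (bv * iv * s) by lra. ring. }
  assert (Hcross : a * muv * (muh * (muv + bh * i)) = bv * bh * (muh * s) * (sv * (muv + bh * i)))
    by (rewrite Hvec; ring).
  replace (muh * s) with (Lh - a * i) in Hcross by lra.
  replace (sv * (muv + bh * i)) with Lv in Hcross by lra.
  lra.
Qed.

Lemma endemic_equilibrium_unique (E1 E2 : state) :
  0 < muh + delta + r1 -> 0 < bh -> 0 <= bv ->
  is_equilibrium (malaria_field Lh Lv muh muv bh bv delta r1) E1 ->
  is_equilibrium (malaria_field Lh Lv muh muv bh bv delta r1) E2 ->
  Ih E1 <> 0 -> Ih E2 <> 0 -> E1 = E2.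
Proof.
  intros ha hbh hbv H1 H2 hI1 hI2.
  apply malaria_equilibrium_eq_of_Ih; [exact H1 | exact H2 |].
  pose proof (malaria_equilibrium_Ih E1 H1 hI1). pose proof (malaria_equilibrium_Ih E2 H2 hI2).
  assert (hD : 0 < (muh + delta + r1) * bh * (muh * muv + bv * Lv))
    by (apply Rmult_lt_0_compat; [nra | assert (0 <= bv * Lv) by nra; nra]).
  apply (Rmult_eq_reg_l ((muh + delta + r1) * bh * (muh * muv + bv * Lv))); lra.
Qed.

Lemma transmission_rates_pos :
  0 < Lh -> 0 < muh + delta + r1 -> 0 <= bh -> 0 <= bv ->
  (muh + delta + r1) * muh * muv ^ 2 < bv * bh * Lv * Lh -> 0 < bh /\ 0 < bv.
Proof.
  intros hLh ha hbh hbv HR.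
  assert (0 < (muh + delta + r1) * muh * muv ^ 2)
    by (apply Rmult_lt_0_compat; [nra | apply pow_lt; lra]).
  assert (0 < bv * bh) by (assert (0 < Lv * Lh) by nra; nra).
  split; nra.
Qed.

Lemma repro_number_gt1 :
  0 < muh + delta + r1 -> 1 < repro_number Lh Lv muh muv bh bv delta r1 ->
  (muh + delta + r1) * muh * muv ^ 2 < bv * bh * Lv * Lh.
Proof.
  intros ha HR0. unfold repro_number in HR0.
  set (z := bh * (Lv / muv) / (muh + delta + r1) * (bv * (Lh / muh) / muv)) in HR0.
  assert (hz : 1 < z).
  { apply Rnot_le_lt. intros Hz. apply sqrt_le_1_alt in Hz. rewrite sqrt_1 in Hz. lra. }
  assert (Hz : z * ((muh + delta + r1) * muh * muv ^ 2) = bv * bh * Lv * Lh)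
    by (unfold z; field; lra).
  assert (0 < (muh + delta + r1) * muh * muv ^ 2)
    by (apply Rmult_lt_0_compat; [nra | apply pow_lt; lra]).
  nra.
Qed.

Lemma endemic_equilibrium_exists :
  0 < muh + delta + r1 -> 0 < bh -> 0 < bv -> 0 <= r1 ->
  (muh + delta + r1) * muh * muv ^ 2 < bv * bh * Lv * Lh ->
  exists E, is_equilibrium (malaria_field Lh Lv muh muv bh bv delta r1) E /\
    0 < Sh E /\ 0 < Ih E /\ 0 <= Rh E /\ 0 < Sv E /\ 0 < Iv E.
Proof.
  intros ha hbh hbv hr1 HR.
  set (a := muh + delta + r1) in *.
  assert (hD : 0 < a * bh * (muh * muv + bv * Lv)) by
    (apply Rmult_lt_0_compat; [nra | assert (0 < bv * Lv) by nra; nra]).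
  set (i := (bv * bh * Lv * Lh - a * muh * muv ^ 2) / (a * bh * (muh * muv + bv * Lv))).
  assert (hi : 0 < i) by (apply Rdiv_lt_0_compat; lra).
  assert (Hi : a * bh * (muh * muv + bv * Lv) * i = bv * bh * Lv * Lh - a * muh * muv ^ 2)
    by (unfold i; field; repeat split; apply Rgt_not_eq; nra).
  clearbody i.
  assert (hbi : 0 < muv + bh * i) by nra.
  set (sv := Lv / (muv + bh * i)).
  assert (hsv : 0 < sv) by (apply Rdiv_lt_0_compat; lra).
  assert (Hsv : sv * (muv + bh * i) = Lv) by (unfold sv; field; lra).
  set (iv := bh * sv * i / muv).
  assert (hiv : 0 < iv) by (apply Rdiv_lt_0_compat; [apply Rmult_lt_0_compat; nra | lra]).
  assert (Hiv : muv * iv = bh * sv * i) by (unfold iv; field; lra).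
  set (s := a * muv * (muv + bh * i) / (bv * bh * Lv)).
  assert (hs : 0 < s) by (apply Rdiv_lt_0_compat; repeat apply Rmult_lt_0_compat; lra).
  assert (Hinf : bv * iv * s = a * i) by (unfold iv, s, sv; field; repeat split; nra).
  assert (Hs : muh * s = Lh - a * i) by (unfold s; field_simplify_eq; [lra | nra]).
  clearbody s iv sv.
  exists (mkState s i (r1 * i / muh) sv iv).
  unfold is_equilibrium, malaria_field, origin; cbn [Sh Ih Rh Sv Iv].
  split; [fold a; f_equal; [lra | lra | field; lra | lra | lra] |].
  repeat split; try lra.
  apply Rle_mult_inv_pos; [apply Rmult_le_pos |]; lra.
Qed.

End Equilibria.

Theorem theorem3p19 (Lh Lv muh muv bh bv delta r1 : R)
  (hLh : 0 < Lh) (hLv : 0 < Lv) (hmuh : 0 < muh) (hmuv : 0 < muv)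
  (hbh : 0 <= bh) (hbv : 0 <= bv) (hdelta : 0 <= delta) (hr1 : 0 <= r1)
  (hR0 : 1 < repro_number Lh Lv muh muv bh bv delta r1) :
  exists Estar : state,
    is_equilibrium (malaria_field Lh Lv muh muv bh bv delta r1) Estar /\
    nonneg_state Estar /\ Estar <> DFE Lh Lv muh muv /\
    (forall E : state,
       is_equilibrium (malaria_field Lh Lv muh muv bh bv delta r1) E ->
       nonneg_state E -> E <> DFE Lh Lv muh muv -> E = Estar) /\
    locally_asymptotically_stable (malaria_field Lh Lv muh muv bh bv delta r1) Estar.
Proof.
  assert (ha : 0 < muh + delta + r1) by lra.
  assert (HR : (muh + delta + r1) * muh * muv ^ 2 < bv * bh * Lv * Lh)
    by (apply repro_number_gt1; assumption).
  destruct (transmission_rates_pos Lh Lv muh muv bh bv delta r1) as [hbh' hbv']; try assumption.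
  destruct (endemic_equilibrium_exists Lh Lv muh muv bh bv delta r1)
    as (Es & HEs & hS & hI & hR & hSv & hIv); try assumption.
  pose proof (DFE_is_equilibrium Lh Lv muh muv bh bv delta r1 hmuh hmuv) as HDFE.
  exists Es. split; [exact HEs |]. split; [unfold nonneg_state; lra |]. split.
  { intros ->. unfold DFE in hI. simpl in hI. lra. }
  split; [| apply malaria_endemic_las; assumption].
  intros E HE _ Hne.
  apply (endemic_equilibrium_unique Lh Lv muh muv bh bv delta r1); try assumption; try lra.
  intros H0. apply Hne, (malaria_equilibrium_eq_of_Ih Lh Lv muh muv bh bv delta r1); assumption.
Qed.
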